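(* In the standing setting, assume that the self-adjoint operator $A^N$ in $\overline V$ associated with $\mathfrak a$ has no eigenvector belonging to $V_D=\ker j$. Let $\lambda,\mu\in\mathbb R$. Then $\lambda$ is an eigenvalue (equivalently, lies in the spectrum) of the self-adjoint operator $A_\mu$ in $\overline V$ associated with $\mathfrak a_\mu$ if and only if $\mu\in\sigma(\mathcal N_\lambda)$.
   Context: Standing setting: $V,H,K$ complex Hilbert spaces, $V$ embedded in $H$ with compact inclusion $i\colon V\to H$, $j\colon V\to K$ compact linear, $\mathfrak a$ a positive, symmetric, continuous sesquilinear form on $V$ which is $i$-elliptic ($\mathfrak a(u,u)+\omega\|u\|_H^2\ge\delta\|u\|_V^2$ for some $\omega,\delta>0$). $\mathfrak a_\mu(u,v)=\mathfrak a(u,v)-\mu(j(u),j(v))_K$; the operator $B$ in $\overline W$ associated with a form $\mathfrak c$ on a closed subspace $W\subset V$ is: $u\in D(B)$, $Bu=f$ iff $u\in W$, $f\in\overline W$, $\mathfrak c(u,v)=(f,v)_H$ for all $v\in W$ (these have compact resolvent). $\mathfrak b_\lambda(u,v)=\mathfrak a(u,v)-\lambda(u,v)_H$, and $\mathcal N_\lambda=\{(j(u),\psi)\in K\times K: u\in V,\ \mathfrak b_\lambda(u,v)=(\psi,j(v))_K\ \forall v\in V\}$, a self-adjoint graph in $K$ with compact resolvent; its single-valued part $\mathcal N_\lambda^\circ$ is the self-adjoint operator in $\overline{D(\mathcal N_\lambda)}$ with graph $\mathcal N_\lambda\cap(\overline{D(\mathcal N_\lambda)}\times\overline{D(\mathcal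 N_\lambda)})$, and $\sigma(\mathcal N_\lambda):=\sigma(\mathcal N_\lambda^\circ)$, which consists of eigenvalues. *)

From mathcomp Require Import all_boot all_order all_algebra.
From mathcomp Require Import complex reals.
Import Order.TTheory GRing.Theory Num.Theory.
Set Implicit Arguments. Unset Strict Implicit. Unset Printing Implicit Defensive.
Local Open Scope ring_scope.
Local Open Scope complex_scope.

Section Defs.
Variable R : realType.
Local Notation C := R[i].

Section Space.
Variable X : lmodType C.
Variable ip : X -> X -> C.

Definition inner_product : Prop :=
  [/\ forall (c : C) (x y z : X), ip (c *: x + y) z = c * ip x z + ip y z,
      forall x y : X, ip y x = (ip x y)^*,
      forall x : X, 0 <= ip x x &
      forall x : X, ip x x = 0 -> x = 0].

Definition hnorm (x : X) : R := Num.sqrt (complex.Re (ip x x)).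

Definition converges_to (u : nat -> X) (l : X) : Prop :=
  forall e : R, 0 < e -> exists N, forall n, (N <= n)%N -> hnorm (u n - l) < e.

Definition cauchy_seq (u : nat -> X) : Prop :=
  forall e : R, 0 < e -> exists N, forall m n, (N <= m)%N -> (N <= n)%N ->
    hnorm (u m - u n) < e.

Definition complete : Prop :=
  forall u, cauchy_seq u -> exists l, converges_to u l.

Definition hilbert : Prop := inner_product /\ complete.

Definition in_closure (S : X -> Prop) (x : X) : Prop :=
  forall e : R, 0 < e -> exists y, S y /\ hnorm (x - y) < e.

(* eigenvalue of a (possibly multivalued) linear operator given by its graph *)
Definition op_eigenvalue (G : X -> X -> Prop) (s : C) : Prop :=
  exists x : X, x <> 0 /\ G x (s *: x).
End Space.

Definition lin_map (X Y : lmodType C) (f : X -> Y) : Prop :=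
  forall (c : C) (x y : X), f (c *: x + y) = c *: f x + f y.

Definition compact_op (X Y : lmodType C) (ipX : X -> X -> C) (ipY : Y -> Y -> C)
    (f : X -> Y) : Prop :=
  lin_map f /\
  forall u : nat -> X, (exists M : R, forall n, hnorm ipX (u n) <= M) ->
    exists phi : nat -> nat, (forall n, (phi n < phi n.+1)%N) /\
      exists l : Y, converges_to ipY (fun n => f (u (phi n))) l.

Section Forms.
Variables (V H K : lmodType C).
Variables (ipV : V -> V -> C) (ipH : H -> H -> C) (ipK : K -> K -> C).
Variables (i : V -> H) (j : V -> K).

Definition sesquilinear (a : V -> V -> C) : Prop :=
  (forall (c : C) (x y z : V), a (c *: x + y) z = c * a x z + a y z) /\
  (forall (c : C) (x y z : V), a z (c *: x + y) = c^* * a z x + a z y).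

Definition form_symmetric (a : V -> V -> C) : Prop :=
  forall u v, a v u = (a u v)^*.

Definition form_positive (a : V -> V -> C) : Prop :=
  forall u, 0 <= a u u.

Definition form_continuous (a : V -> V -> C) : Prop :=
  exists M : R, forall u v, `|a u v| <= (M * hnorm ipV u * hnorm ipV v)%:C.

Definition i_elliptic (a : V -> V -> C) : Prop :=
  exists omega delta : R, 0 < omega /\ 0 < delta /\
    forall u, (delta * hnorm ipV u ^+ 2)%:C
              <= a u u + (omega * hnorm ipH (i u) ^+ 2)%:C.

Definition Vbar (x : H) : Prop := in_closure ipH (fun y => exists v, y = i v) x.

(* graph of the operator B in Vbar associated with a form c on W = V:
   x in D(B), Bx = f  iff  x = u in V, f in Vbar, c(u,v) = (f,v)_H for all v *)
Definition assoc_op (c : V -> V -> C) (x f : H) : Prop :=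
  exists u : V, x = i u /\ Vbar f /\ forall v, c u v = ipH f (i v).

Definition form_mu (a : V -> V -> C) (mu : R) (u v : V) : C :=
  a u v - mu%:C * ipK (j u) (j v).

Definition form_b (a : V -> V -> C) (lam : R) (u v : V) : C :=
  a u v - lam%:C * ipH (i u) (i v).

Definition DtN_graph (a : V -> V -> C) (lam : R) (phi psi : K) : Prop :=
  exists u : V, j u = phi /\ forall v, form_b a lam u v = ipK psi (j v).

Definition DtN_dom (a : V -> V -> C) (lam : R) (phi : K) : Prop :=
  exists psi, DtN_graph a lam phi psi.

(* single-valued part N_lambda^o : graph N_lambda intersected with
   closure(D(N_lambda)) x closure(D(N_lambda)) *)
Definition DtN_op (a : V -> V -> C) (lam : R) (phi psi : K) : Prop :=
  DtN_graph a lam phi psi /\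
  in_closure ipK (DtN_dom a lam) phi /\ in_closure ipK (DtN_dom a lam) psi.

(* sigma(N_lambda) := sigma(N_lambda^o), which consists of eigenvalues *)
Definition DtN_spectrum (a : V -> V -> C) (lam mu : R) : Prop :=
  op_eigenvalue (DtN_op a lam) mu%:C.
End Forms.
End Defs.

(* If u is an eigenvector of A_mu for lam, then a(u,v) = lam (u,v)_H + mu (j u, j v)_K
   for all v; read the other way round, this says b_lam(u,v) = (mu j u, j v)_K, i.e.
   (j u, mu j u) lies in N_lam, and conversely.  The only point needing the hypothesis
   on A^N is that j u must not vanish: if it did, the identity would make u an
   eigenvector of A^N inside ker j.  The eigenpair (j u, mu j u) automatically belongs to
   the single-valued part of N_lam, since both entries lie in D(N_lam) itself. *)

From mathcomp Require Import all_boot all_order all_algebra.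
From mathcomp Require Import complex reals.
Import Order.TTheory GRing.Theory Num.Theory.
Local Open Scope ring_scope.
Local Open Scope complex_scope.

Set Implicit Arguments. Unset Strict Implicit.

Section Linearity.
Variable R : realType.
Local Notation C := R[i].

Definition left_linear (X Y : lmodType C) (f : X -> Y -> C) : Prop :=
  forall (c : C) (x y : X) (z : Y), f (c *: x + y) z = c * f x z + f y z.

Lemma lin_map0 (X Y : lmodType C) (f : X -> Y) : lin_map f -> f 0 = 0.
Proof.
move=> hf; have := hf 1 0 0; rewrite scaler0 add0r scale1r -{1}[f 0]addr0.
by move/addrI.
Qed.

Lemma lin_mapZ (X Y : lmodType C) (f : X -> Y) (c : C) (x : X) :
  lin_map f -> f (c *: x) = c *: f x.
Proof. by move=> hf; have := hf c x 0; rewrite !addr0 (lin_map0 hf) addr0. Qed.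

Lemma lin_map_eq0 (X Y : lmodType C) (f : X -> Y) (x : X) :
  lin_map f -> injective f -> f x = 0 -> x = 0.
Proof. by move=> hf inj_f fx0; apply: inj_f; rewrite fx0 (lin_map0 hf). Qed.

Lemma left_linear0l (X Y : lmodType C) (f : X -> Y -> C) (z : Y) :
  left_linear f -> f 0 z = 0.
Proof.
move=> hf; have := hf 1 0 0 z; rewrite scaler0 add0r mul1r -{1}[f 0 z]addr0.
by move/addrI.
Qed.

Lemma left_linearZl (X Y : lmodType C) (f : X -> Y -> C) (c : C) (x : X) (z : Y) :
  left_linear f -> f (c *: x) z = c * f x z.
Proof. by move=> hf; have := hf c x 0 z; rewrite !addr0 (left_linear0l _ hf) addr0. Qed.

Lemma in_closure_refl (X : lmodType C) (ip : X -> X -> C) (S : X -> Prop) (x : X) :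
  left_linear ip -> S x -> in_closure ip S x.
Proof.
move=> hip Sx e e_gt0; exists x; split=> //.
by rewrite /hnorm subrr (left_linear0l _ hip) /= sqrtr0.
Qed.

End Linearity.

Section EigenvaluesAndDtN.
Variable R : realType.
Local Notation C := R[i].
Variables (V H K : lmodType C).
Variables (ipH : H -> H -> C) (ipK : K -> K -> C).
Variables (i : V -> H) (j : V -> K) (a : V -> V -> C).
Hypotheses (ipH_lin : left_linear ipH) (ipK_lin : left_linear ipK).
Hypotheses (i_lin : lin_map i) (j_lin : lin_map j) (a_lin : left_linear a).

Lemma Vbar_image (u : V) : Vbar ipH i (i u).
Proof. by apply: in_closure_refl => //; exists u. Qed.

Lemma assoc_op_imageP (c : V -> V -> C) (s : C) (u : V) :
  injective i ->
  assoc_op ipH i c (i u) (s *: i u) <-> forall v, c u v = ipH (s *: i u) (i v).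
Proof.
move=> inj_i; split=> [[w [/inj_i <- [_ hw]]] // | hu].
exists u; split=> //; split=> //.
by rewrite -(lin_mapZ _ _ i_lin); apply: Vbar_image.
Qed.

Lemma form_mu_ker (mu : R) (u v : V) : j u = 0 -> form_mu ipK j a mu u v = a u v.
Proof. by move=> ju0; rewrite /form_mu ju0 left_linear0l // mulr0 subr0. Qed.

Lemma form_mu_eigen_form_b (lam mu : R) (u : V) :
  (forall v, form_mu ipK j a mu u v = ipH (lam%:C *: i u) (i v)) <->
  (forall v, form_b ipH i a lam u v = ipK (mu%:C *: j u) (j v)).
Proof.
rewrite /form_mu /form_b.
split=> h v; move/eqP: (h v); rewrite (left_linearZl _ _ _ ipH_lin)
  (left_linearZl _ _ _ ipK_lin) subr_eq => /eqP ->; by rewrite addrAC subrr add0r.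
Qed.

Lemma DtN_graphZ (lam : R) (c : C) (phi psi : K) :
  DtN_graph ipH ipK i j a lam phi psi ->
  DtN_graph ipH ipK i j a lam (c *: phi) (c *: psi).
Proof.
move=> [u [<- hu]]; exists (c *: u); split; first exact: lin_mapZ.
move=> v; rewrite /form_b (lin_mapZ _ _ i_lin) (left_linearZl _ _ _ a_lin).
rewrite (left_linearZl _ _ _ ipH_lin) (left_linearZl _ _ _ ipK_lin) -hu.
by rewrite /form_b mulrBr mulrCA.
Qed.

Lemma DtN_op_eigenpair (lam : R) (s : C) (phi : K) :
  DtN_graph ipH ipK i j a lam phi (s *: phi) ->
  DtN_op ipH ipK i j a lam phi (s *: phi).
Proof.
move=> hphi; split=> //; split; apply: in_closure_refl => //.
  by exists (s *: phi).
by exists (s *: (s *: phi)); apply: DtN_graphZ.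
Qed.

End EigenvaluesAndDtN.

Unset Implicit Arguments.

Theorem lemma2p5 (R : realType) (V H K : lmodType R[i])
    (ipV : V -> V -> R[i]) (ipH : H -> H -> R[i]) (ipK : K -> K -> R[i])
    (i : V -> H) (j : V -> K) (a : V -> V -> R[i]) :
  hilbert ipV -> hilbert ipH -> hilbert ipK ->
  injective i -> compact_op ipV ipH i -> compact_op ipV ipK j ->
  sesquilinear a -> form_symmetric a -> form_positive a ->
  form_continuous ipV a -> i_elliptic ipV ipH i a ->
  (* A^N has no eigenvector in V_D = ker j *)
  (forall (s : R[i]) (u : V), u <> 0 -> j u = 0 ->
     ~ assoc_op ipH i a (i u) (s *: i u)) ->
  forall lam mu : R,
    op_eigenvalue (assoc_op ipH i (form_mu ipK j a mu)) lam%:C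
    <-> DtN_spectrum ipH ipK i j a lam mu.
Proof.
move=> _ [[ipH_lin _ _ _] _] [[ipK_lin _ _ _] _] inj_i [i_lin _] [j_lin _] [a_lin _]
  _ _ _ _ noDirichlet lam mu.
split.
- move=> [x [iu_neq0 [u [xE [_ hu]]]]]; subst x.
  have ju_neq0 : j u <> 0.
    move=> ju0; apply: (noDirichlet lam%:C u _ ju0).
      by move=> u0; apply: iu_neq0; rewrite u0 (lin_map0 i_lin).
    by apply/(assoc_op_imageP ipH_lin i_lin _ _ _ inj_i) => v;
      rewrite -hu (form_mu_ker a ipK_lin mu v ju0).
  exists (j u); split=> //; apply: (DtN_op_eigenpair ipH_lin ipK_lin i_lin j_lin a_lin).
  by exists u; split=> //; apply/(form_mu_eigen_form_b _ _ _ ipH_lin ipK_lin).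
- move=> [phi [ju_neq0 [[u [phiE hu]] _]]]; subst phi.
  exists (i u); split.
    move=> /(lin_map_eq0 i_lin inj_i) u0; apply: ju_neq0.
    by rewrite u0 (lin_map0 j_lin).
  apply/(assoc_op_imageP ipH_lin i_lin _ _ _ inj_i).
  by apply/(form_mu_eigen_form_b _ _ _ ipH_lin ipK_lin).
Qed.
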